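(* Let $k \geq 1$ be an integer. There exist complex matrices $W_{(v)}, W_{(w)}$ of size $(4k+1) \times (2k+2)$, with columns indexed by $0,\ldots,2k+1$, such that, writing $W := [W_{(v)}, W_{(w)}]$ for the $(4k+1)\times(4k+4)$ block matrix and $c^{(v)}_i, c^{(w)}_i$ for the $i$-th columns of $W_{(v)}, W_{(w)}$: (i) $c^{(v)}_i \perp c^{(v)}_j$ whenever $j - i \not\equiv 0, 1, 2k+1 \pmod{2k+2}$; (ii) $c^{(w)}_i \perp c^{(w)}_j$ whenever $j - i \not\equiv 0, 1, 2k+1 \pmod{2k+2}$; (iii) $c^{(v)}_i \perp c^{(w)}_j$ whenever $i \neq j$; (iv) every $(4k+1)\times(4k+1)$ submatrix of $W$ (formed by any $4k+1$ columns) is nonsingular.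
   Context: Orthogonality is with respect to the standard inner product on $\mathbb{C}^{4k+1}$. *)

From HB Require Import structures.
From mathcomp Require Import all_boot all_order all_algebra all_field.
Set Implicit Arguments. Unset Strict Implicit. Unset Printing Implicit Defensive.
Import Order.TTheory GRing.Theory Num.Theory.
Local Open Scope ring_scope.

(* Complex numbers are modelled by algC (algebraically closed, with conjugation). *)

Definition cdot (m : nat) (u v : 'cV[algC]_m) : algC :=
  \sum_(r < m) (u r 0)^* * v r 0.

Definition corth (m : nat) (u v : 'cV[algC]_m) : Prop := cdot u v = 0.

(* (j - i) mod n, computed in nat for i, j < n *)
Definition dmod (n i j : nat) : nat := ((j + n - i) %% n)%N.

From HB Require Import structures.
From mathcomp Require Import all_boot all_order all_algebra all_field.
From mathcomp Require Import ring lra zify.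
Import Order.TTheory GRing.Theory Num.Theory.
Local Open Scope ring_scope.

(* Construction for Lemma 3.  Put N = 2k + 2 and M = 4k + 1 = N + (N - 3).

   Let w be a primitive N-th root of unity whose real part a beats that of
   every N-th root of unity other than 1, w and w^-1 (morally exp(2 i pi/N);
   exists_extremal_root obtains it from a rotation argument), and let
   P(z) = A + B z + B^* z^-1 be a Laurent polynomial that is positive on the
   unit circle, with P(w) P(w^-1) = P(1)^2 but P(z) P(z^-1) > P(1)^2 for the
   other roots z <> 1.  Column j of Wv is the Fourier mode r |-> w^(jr)
   scaled by sqrt P(w^r) (and zero in the last N - 3 rows); column j of Ww is
   the same mode scaled by P(1) / sqrt P(w^r), completed in row N + m by the
   mode w^(j(m+2)) scaled by sqrt (P(w^-(m+2)) - P(1)^2 / P(w^(m+2))).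

   The Hermitian products of columns i, j are then sums over r of Fourier
   coefficients times (w^(j-i))^r: P(w^r) for Wv/Wv, P(w^-r) for Ww/Ww and
   the constant P(1) for Wv/Ww, so (i)-(iii) follow from geometric sums over
   roots of unity.  For (iv), a kernel vector of an M x M minor vanishes on
   the three omitted columns; by Fourier inversion each entry of a kernel
   vector of [Wv, Ww] is, up to a nonzero factor, the value of one quadratic
   polynomial at a node attached to its column.  The 2N nodes are distinct,
   so that polynomial has three roots, hence is zero, and so is the vector. *)

Lemma geo_sum_root (N : nat) (z : algC) : z ^+ N = 1 ->
  \sum_(r < N) z ^+ r = if z == 1 then N%:R else 0.
Proof.
move=> zN; have [->|z1] := eqVneq z 1.
  by rewrite (eq_bigr (fun _ => 1)) ?sumr_const ?card_ord // => i _; rewrite expr1n.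
have : (z - 1) * \sum_(i < N) z ^+ i = 0 by rewrite -subrX1 zN subrr.
by move/eqP; rewrite mulf_eq0 subr_eq0 (negbTE z1) => /eqP.
Qed.

Lemma root1_norm {N : nat} {z : algC} : (0 < N)%N -> z ^+ N = 1 -> `|z| = 1.
Proof.
move=> N0 zN; apply/eqP; rewrite -(@pexpr_eq1 _ _ N N0) ?normr_ge0 //.
by rewrite -normrX zN normr1.
Qed.

Lemma root1_conj {N : nat} {z : algC} : (0 < N)%N -> z ^+ N = 1 -> z^* = z^-1.
Proof. by move=> N0 zN; rewrite invC_norm (root1_norm N0 zN) expr1n invr1 mul1r. Qed.

Lemma root1_pred {N : nat} {z : algC} : (0 < N)%N -> z ^+ N = 1 -> z ^+ N.-1 = z^-1.
Proof.
move=> N0 zN; have z0 : z != 0 by rewrite -normr_eq0 (root1_norm N0 zN) oner_eq0.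
by apply: (mulfI z0); rewrite mulfV // -exprS prednK.
Qed.

Lemma root1_inv {N : nat} {z : algC} : z ^+ N = 1 -> z^-1 ^+ N = 1.
Proof. by move=> zN; rewrite exprVn zN invr1. Qed.

Lemma unit_Re_le1 (z : algC) : `|z| = 1 -> 'Re z <= 1.
Proof.
move=> nz; rewrite -nz; apply: le_trans (leif_normC_Re_Creal z).
by rewrite real_ler_norm ?Creal_Re.
Qed.

Lemma unit_Re_lt1 (z : algC) : `|z| = 1 -> z != 1 -> 'Re z < 1.
Proof.
move=> nz z1; rewrite lt_def unit_Re_le1 // andbT; apply: contra z1 => /eqP Rz.
apply/eqP/eqC_semipolar; rewrite ?normr1 ?nz //.
  by rewrite -Rz; apply/esym/Creal_ReP; rewrite rpred1.
by rewrite (Creal_ImP 1 _) ?rpred1 // mulr0.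
Qed.

Lemma seq_argmax {T : eqType} {R : numDomainType} {F : T -> R} {s : seq T} :
  s != [::] -> (forall x, F x \is Num.real) ->
  exists2 y, y \in s & forall z, z \in s -> F z <= F y.
Proof.
move=> + FR; elim: s => [//|x s IH] _.
have [->|s0] := eqVneq s [::].
  by exists x; rewrite ?mem_head // => z; rewrite inE => /eqP->.
have [y ys ymax] := IH s0.
have /orP[xy|yx] := real_leVge (FR x) (FR y).
  exists y; first by rewrite inE ys orbT.
  by move=> z; rewrite inE => /orP[/eqP->//|/ymax].
exists x; first exact: mem_head.
by move=> z; rewrite inE => /orP[/eqP->//|/ymax /le_trans]; apply.
Qed.

(* Planar geometry in coordinates: if the unit vector (x, y) is not beaten in
   abscissa by its rotations by the angles +-theta, where cos theta = a < 1,
   then its angle is at most theta/2, so its abscissa exceeds a. *)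
Lemma rotation_cap (R : realFieldType) (x y a b : R) :
  x ^+ 2 + y ^+ 2 = 1 -> a ^+ 2 + b ^+ 2 = 1 -> a < 1 ->
  x * a - y * b <= x -> x * a + y * b <= x -> a < x.
Proof. by move=> *; nra. Qed.

Lemma unit_rotation_cap (eta w : algC) : `|eta| = 1 -> `|w| = 1 -> w != 1 ->
  'Re (eta * w) <= 'Re eta -> 'Re (eta * w^*) <= 'Re eta -> 'Re w < 'Re eta.
Proof.
move=> neta nw w1; rewrite !ReM Re_conj Im_conj mulrN opprK => h1 h2.
have circle (z : algC) : `|z| = 1 -> 'Re z ^+ 2 + 'Im z ^+ 2 = 1.
  by move=> nz; rewrite -normC2_Re_Im nz expr1n.
pose x := in_algR (Creal_Re eta); pose y := in_algR (Creal_Im eta).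
pose a := in_algR (Creal_Re w); pose b := in_algR (Creal_Im w).
apply: (@rotation_cap algR x y a b) => //.
- by apply: val_inj; rewrite /= circle.
- by apply: val_inj; rewrite /= circle.
- exact: unit_Re_lt1.
Qed.

Lemma exists_max_root {N : nat} : (1 < N)%N -> exists w0 : algC,
  [/\ w0 ^+ N = 1, w0 != 1 & forall z, z ^+ N = 1 -> z != 1 -> 'Re z <= 'Re w0].
Proof.
move=> N1; have N0 : (0 < N)%N by apply: ltnW.
have [xi xi_prim] := C_prim_root_exists N0.
have s0 : [seq xi ^+ i | i <- iota 1 N.-1] != [::].
  by rewrite -size_eq0 size_map size_iota; lia.
have [y /mapP[i]] := seq_argmax s0 (@Creal_Re _).
rewrite mem_iota add1n prednK // => /andP[i0 iN] -> imax.
exists (xi ^+ i); split.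
- by rewrite exprAC (prim_expr_order xi_prim) expr1n.
- by rewrite -(expr0 xi) (eq_prim_root_expr xi_prim) mod0n modn_small // -lt0n.
move=> z zN z1; have [j zj] := prim_rootP xi_prim zN.
apply: imax; rewrite zj; apply: map_f; rewrite mem_iota add1n prednK //.
rewrite ltn_ord andbT lt0n; apply: contra z1 => /eqP j0.
by rewrite zj j0 expr0.
Qed.

(* Otherwise take a
   coset z <w0> not containing 1 and its element eta of maximal real part:
   eta w0 and eta w0^-1 lie in the same coset, so unit_rotation_cap gives
   Re w0 < Re eta, contradicting the maximality of w0. *)
Lemma max_root_generates {N : nat} {w0 : algC} : (0 < N)%N ->
  w0 ^+ N = 1 -> w0 != 1 -> (forall z, z ^+ N = 1 -> z != 1 -> 'Re z <= 'Re w0) ->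
  forall z, z ^+ N = 1 -> exists j : nat, z = w0 ^+ j.
Proof.
move=> N0 w0N w01 w0max z zN.
have [/existsP[j /eqP ->]|/existsPn zNpow] := boolP [exists j : 'I_N, z == w0 ^+ j].
  by exists j.
exfalso; have {}zNpow j : z != w0 ^+ j.
  by rewrite -(expr_mod j w0N); apply: (zNpow (Ordinal (ltn_pmod j N0))).
pose coset := [seq z * w0 ^+ j | j <- iota 0 N].
have in_coset j : z * w0 ^+ j \in coset.
  by rewrite -(expr_mod j w0N); apply: map_f; rewrite mem_iota ltn_pmod.
have c0 : coset != [::] by rewrite -size_eq0 size_map size_iota -lt0n.
have [eta] := seq_argmax c0 (@Creal_Re _).
rewrite {1}/coset => /mapP[j0 _ ->] etamax.
have etaN : (z * w0 ^+ j0) ^+ N = 1 by rewrite exprMn zN exprAC w0N !expr1n mulr1.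
have eta1 : z * w0 ^+ j0 != 1.
  apply: contraNneq (zNpow (j0 * N.-1)%N) => e1.
  have w0j : w0 ^+ j0 * w0 ^+ (j0 * N.-1) = 1.
    by rewrite -exprD addnC -mulnSr prednK // mulnC exprM w0N expr1n.
  by rewrite -[z]mulr1 -w0j mulrA e1 mul1r.
have : 'Re w0 < 'Re (z * w0 ^+ j0).
  apply: unit_rotation_cap (root1_norm N0 etaN) (root1_norm N0 w0N) w01 _ _.
    by rewrite -mulrA -exprSr etamax.
  by rewrite (root1_conj N0 w0N) -(root1_pred N0 w0N) -mulrA -exprD etamax.
by move/lt_geF; rewrite w0max.
Qed.

(* An N-th root of unity whose powers exhaust all N-th roots is primitive:
   writing it as xi^i for a primitive xi, and xi as its j-th power, gives
   i * j = 1 modulo N. *)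
Lemma generator_primitive {N : nat} {w0 : algC} : (0 < N)%N -> w0 ^+ N = 1 ->
  (forall z, z ^+ N = 1 -> exists j : nat, z = w0 ^+ j) -> N.-primitive_root w0.
Proof.
move=> N0 w0N gen; have [xi xi_prim] := C_prim_root_exists N0.
have [j xij] := gen xi (prim_expr_order xi_prim).
have [i w0i] := prim_rootP xi_prim w0N; rewrite w0i in xij *.
rewrite prim_root_exp_coprime //.
have : xi ^+ 1 == xi ^+ (i * j) by rewrite expr1 {1}xij -exprM.
rewrite (eq_prim_root_expr xi_prim) => /eqP ij.
have : coprime (1 %% N) N by rewrite coprime_modl coprime1n.
by rewrite ij coprime_modl coprimeMl => /andP[].
Qed.

Lemma unit_same_Re {z w0 : algC} : `|z| = `|w0| -> 'Re z = 'Re w0 ->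
  z = w0 \/ z = w0^*.
Proof.
move=> nzw Rzw.
have ImR : 'Im z * 'Im w0 \is Num.real by rewrite rpredM ?Creal_Im.
have /orP[Ile|Ige] := real_leVge ImR (rpred0 _ : 0 \is Num.real).
  right; apply: eqC_semipolar; rewrite ?norm_conjC ?Re_conj //.
  by rewrite Im_conj mulrN oppr_ge0.
by left; apply: eqC_semipolar.
Qed.

Lemma exists_extremal_root {N : nat} : (2 < N)%N -> exists w : algC,
  N.-primitive_root w /\
  forall z, z ^+ N = 1 -> z != 1 -> z != w -> z != w^-1 -> 'Re z < 'Re w.
Proof.
move=> N2; have N0 : (0 < N)%N by apply: leq_trans N2.
have [w [wN w1 wmax]] := exists_max_root (ltnW N2).
exists w; split; first exact: generator_primitive N0 wN (max_root_generates N0 wN w1 wmax).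
move=> z zN z1 zw zwi; rewrite lt_def wmax // andbT; apply/eqP => /esym Rzw.
have nzw : `|z| = `|w| by rewrite (root1_norm N0 zN) (root1_norm N0 wN).
have [ezw|ezwi] := unit_same_Re nzw Rzw.
  by move/eqP: zw.
by move/eqP: zwi; rewrite -(root1_conj N0 wN).
Qed.

Lemma cdot_col (m n p : nat) (U : 'M[algC]_(m, n)) (V : 'M[algC]_(m, p)) i j :
  cdot (col i U) (col j V) = \sum_(r < m) (U r i)^* * V r j.
Proof. by apply: eq_bigr => r _; rewrite !mxE. Qed.

Lemma sum_edges {V : nmodType} {n : nat} (f : nat -> V) : (2 < n)%N ->
  \sum_(r < n) f r = f 0%N + f 1%N + f n.-1 + \sum_(m < n - 3) f m.+2.
Proof.
move=> n_gt2; have nE : n = (n - 3).+3 by lia.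
rewrite [in LHS]nE big_ord_recl big_ord_recl big_ord_recr /= /bump /= !add1n.
have -> : (n - 3).+2 = n.-1 by lia.
by rewrite -!addrA; congr (_ + (_ + _)); exact: addrC.
Qed.

Lemma minor_det_neq0 {R : idomainType} {m n : nat} {A : 'M[R]_(m, n)}
    {f : 'I_m -> 'I_n} : injective f ->
  (forall x : 'I_n -> R, (forall r, \sum_(c < n) A r c * x c = 0) ->
     (forall c, c \notin codom f -> x c = 0) -> forall c, x c = 0) ->
  \det (colsub f A) != 0.
Proof.
move=> f_inj ker0; rewrite -det_tr; apply/negP => /det0P[v v_neq0 vA].
pose x c := \sum_(i | f i == c) v 0 i.
have x_f i : x (f i) = v 0 i.
  by rewrite /x (eq_bigl (pred1 i)) ?big_pred1_eq // => i' /=; rewrite (inj_eq f_inj).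
have x_off c : c \notin codom f -> x c = 0.
  move=> c_off; rewrite /x big_pred0 // => i; apply/negbTE.
  by apply: contra c_off => /eqP <-; exact: codom_f.
have x_ker r : \sum_(c < n) A r c * x c = 0.
  transitivity ((v *m (colsub f A)^T) 0 r); last by rewrite vA mxE.
  rewrite mxE /x; under [RHS]eq_bigr => i _ do rewrite !mxE.
  rewrite (eq_bigr (fun c => \sum_(i < m) if f i == c then A r c * v 0 i else 0)); last first.
    by move=> c _; rewrite mulr_sumr big_mkcond.
  rewrite exchange_big; apply: eq_bigr => i _ /=.
  rewrite (bigD1 (f i)) //= eqxx big1 ?addr0 => [|c fic]; first by rewrite mulrC.
  by rewrite eq_sym (negPf fic).
by move/eqP: v_neq0; apply; apply/rowP => i; rewrite mxE -x_f ker0.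
Qed.

Lemma three_outside_codom {m n : nat} {f : 'I_m -> 'I_n} : injective f ->
  n = (m + 3)%N -> exists cs : seq 'I_n,
  [/\ uniq cs, size cs = 3 & forall c, c \in cs -> c \notin codom f].
Proof.
move=> f_inj nE; exists (enum [predC [in codom f]]); split.
- exact: enum_uniq.
- rewrite -cardE; have := cardC [in codom f]; rewrite card_codom // !card_ord => h.
  by apply/eqP; rewrite -(eqn_add2l m) h nE.
- by move=> c; rewrite mem_enum inE.
Qed.

Module Lemma3Construction.

Section Construction.

Variable N : nat.
Hypothesis N_gt3 : (3 < N)%N.
Variable w : algC.
Hypothesis w_prim : N.-primitive_root w.
Hypothesis w_extremal :
  forall z, z ^+ N = 1 -> z != 1 -> z != w -> z != w^-1 -> 'Re z < 'Re w.

Let N_gt0 : (0 < N)%N. Proof. by apply: leq_trans N_gt3. Qed.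

Lemma wN : w ^+ N = 1. Proof. exact: prim_expr_order. Qed.

Lemma wpow_root (m : nat) : (w ^+ m) ^+ N = 1.
Proof. by rewrite exprAC wN expr1n. Qed.

Lemma wpow_eq1 (e : nat) : (w ^+ e == 1) = (N %| e)%N.
Proof. by rewrite (prim_order_dvd w_prim). Qed.

Lemma w_norm : `|w| = 1. Proof. exact: root1_norm N_gt0 wN. Qed.

Lemma wpow_neq0 (m : nat) : w ^+ m != 0.
Proof. by rewrite expf_neq0 // -normr_eq0 w_norm oner_eq0. Qed.

Lemma wpow_conj (m : nat) : (w ^+ m)^* = (w ^+ m)^-1.
Proof. exact: root1_conj N_gt0 (wpow_root m). Qed.

Lemma w_inv : w^-1 = w ^+ N.-1.
Proof. by rewrite (root1_pred N_gt0 wN). Qed.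

Lemma wpow_inj (i j : nat) : (i < N)%N -> (j < N)%N -> (w ^+ i == w ^+ j) = (i == j).
Proof. by move=> iN jN; rewrite (eq_prim_root_expr w_prim) !modn_small. Qed.

Lemma w_neq1 : w != 1.
Proof. by rewrite -[w]expr1 wpow_eq1; apply/negP => /dvdn_leq; lia. Qed.

Definition a := 'Re w.

Lemma a_lt1 : a < 1. Proof. exact: unit_Re_lt1 w_norm w_neq1. Qed.

Lemma a_gtm1 : -1 < a.
Proof.
have w_neqm1 : - w != 1.
  apply/eqP => wm1; have : w ^+ 2 == 1 by rewrite -sqrrN wm1 expr1n.
  by rewrite wpow_eq1 => /dvdn_leq; lia.
by rewrite ltrNl -raddfN /=; apply: unit_Re_lt1; rewrite ?normrN ?w_norm.
Qed.

(* The Laurent polynomial P(z) = A + B z + B^* z^-1, with B = -1 + i t,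
   t = 2 / (1 + a) and A = |B|^2 (1 + a): it is positive on the unit circle
   and these values make P(w) P(w^-1) = P(1)^2 (see P_gap_identity). *)
Definition t := 2 / (1 + a).
Definition B : algC := -1 + 'i * t.
Definition A := `|B| ^+ 2 * (1 + a).
Definition P (z : algC) := A + B * z + B^* * z^-1.

Lemma one_plus_a_gt0 : 0 < 1 + a. Proof. by rewrite -ltrBlDl sub0r a_gtm1. Qed.

Let one_plus_a_neq0 : 1 + a != 0. Proof. by rewrite gt_eqF ?one_plus_a_gt0. Qed.

Lemma t_real : t \is Num.real.
Proof. by rewrite ger0_real // divr_ge0 ?ler0n ?ltW ?one_plus_a_gt0. Qed.

Lemma t_neq0 : t != 0.
Proof. by rewrite mulf_neq0 ?invr_eq0 ?pnatr_eq0. Qed.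

Lemma B_conj : B^* = -1 - 'i * t.
Proof. by rewrite conjC_rect ?rpredN ?rpred1 ?t_real. Qed.

(* Re B = -1: this is all that the identity P_gap_identity uses about B. *)
Lemma B_conj_Re : B^* = -2 - B.
Proof. by rewrite B_conj /B; ring. Qed.

Lemma B_normK : `|B| ^+ 2 = 1 + t ^+ 2.
Proof.
rewrite normCK B_conj /B.
have -> : (-1 + 'i * t) * (-1 - 'i * t) = 1 - 'i ^+ 2 * t ^+ 2 by ring.
by rewrite sqrCi mulN1r opprK.
Qed.

(* A dominates the two other coefficients: A^2 - (2|B|)^2 = |B|^2 (1 + a)^2. *)
Lemma A_gt : 2 * `|B| < A.
Proof.
have A_ge0 : 0 <= A by rewrite mulr_ge0 ?exprn_ge0 ?normr_ge0 ?ltW ?one_plus_a_gt0.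
have B_sqr_gt0 : 0 < `|B| ^+ 2.
  by rewrite B_normK ltr_pwDl ?ltr01 ?real_exprn_even_ge0 ?t_real.
have sqr_lt : (2 * `|B|) ^+ 2 < A ^+ 2.
  have -> : A ^+ 2 = (2 * `|B|) ^+ 2 + (`|B| * (1 + a)) ^+ 2.
    by rewrite !exprMn /A B_normK /t; field; exact: one_plus_a_neq0.
  by rewrite ltrDl exprMn mulr_gt0 // exprn_gt0 // one_plus_a_gt0.
have twoB_ge0 : 0 <= 2 * `|B| by rewrite mulr_ge0 ?normr_ge0.
by move: sqr_lt; rewrite ltr_sqr ?nnegrE.
Qed.

Lemma P_pos (z : algC) : `|z| = 1 -> 0 < P z.
Proof.
move=> nz; have z_inv : z^-1 = z^* by rewrite invC_norm nz expr1n invr1 mul1r.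
have -> : P z = A + 2 * 'Re (B * z) by rewrite /P z_inv ReE rmorphM /=; field.
have ReBz : - `|B| <= 'Re (B * z).
  have : `|'Re (B * z)| <= `|B * z| := leif_normC_Re_Creal (B * z).
  by rewrite real_ler_norml ?Creal_Re // normrM nz mulr1 => /andP[].
apply: lt_le_trans (_ : 0 < A - 2 * `|B|) _; first by rewrite subr_gt0 A_gt.
by rewrite lerD2l -mulrN ler_pM2l ?ltr0n.
Qed.

Lemma P_root_gt0 (z : algC) : z ^+ N = 1 -> 0 < P z.
Proof. by move=> zN; apply/P_pos/(root1_norm N_gt0 zN). Qed.

Lemma P_gap_identity (z : algC) : z != 0 ->
  P z * P z^-1 - P 1 ^+ 2 =
  4 * `|B| ^+ 2 * ((z + z^-1) / 2 - 1) * ((z + z^-1) / 2 - a).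
Proof. by move=> z0; rewrite /P /A normCK B_conj_Re; field. Qed.

Lemma Re_root (z : algC) : z ^+ N = 1 -> 'Re z = (z + z^-1) / 2.
Proof. by move=> zN; rewrite ReE (root1_conj N_gt0 zN). Qed.

Lemma P_w_balanced : P w * P w^-1 = P 1 ^+ 2.
Proof.
apply/eqP; rewrite -subr_eq0 P_gap_identity ?(wpow_neq0 1) //.
by rewrite -Re_root ?wN // subrr mulr0.
Qed.

(* For the other roots z <> 1 the product exceeds P(1)^2, since then
   Re z < a < 1 by the choice of w. *)
Lemma P_gap (z : algC) : z ^+ N = 1 -> z != 1 -> z != w -> z != w^-1 ->
  P 1 ^+ 2 < P z * P z^-1.
Proof.
move=> zN z1 zw zwi; have Rz_lt := w_extremal z zN z1 zw zwi.
have z0 : z != 0 by rewrite -normr_eq0 (root1_norm N_gt0 zN) oner_eq0.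
rewrite -subr_gt0 P_gap_identity // -Re_root // -mulrA mulr_gt0 //.
  by rewrite mulr_gt0 // B_normK ltr_pwDl ?ltr01 ?real_exprn_even_ge0 ?t_real.
rewrite -mulrNN !opprB mulr_gt0 // subr_gt0 //.
exact: lt_trans Rz_lt a_lt1.
Qed.

Lemma P_w_neq : P w != P w^-1.
Proof.
rewrite -subr_eq0.
have -> : P w - P w^-1 = (B - B^* ) * (w - w^-1) by rewrite /P invrK; ring.
rewrite mulf_neq0 //.
  have -> : B - B^* = 2 * 'i * t by rewrite B_conj /B; ring.
  by rewrite mulf_neq0 ?t_neq0 // mulf_neq0 ?neq0Ci ?pnatr_eq0.
have w2 : w ^+ 2 != 1 by rewrite wpow_eq1; apply/negP => /dvdn_leq; lia.
rewrite subr_eq0; apply: contra_neq w2 => ww.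
by rewrite expr2 {1}ww mulVf ?(wpow_neq0 1).
Qed.


(* Row scales of the construction: the v-columns carry alpha r = sqrt P(w^r),
   the w-columns carry beta r = P(1) / alpha r in the first N rows, and the
   extra rows carry gamma m = sqrt (defect m), where the defect
   P(w^-m) - beta m ^ 2 is what the first N rows miss from the Fourier
   coefficients P(w^-m). *)
Definition alpha (r : nat) := sqrtC (P (w ^+ r)).
Definition beta (r : nat) := P 1 / alpha r.
Definition defect (m : nat) := P (w ^+ m)^-1 - P 1 ^+ 2 / P (w ^+ m).
Definition gamma (m : nat) := sqrtC (defect m).

Lemma alpha_gt0 (r : nat) : 0 < alpha r.
Proof. by rewrite sqrtC_gt0 P_root_gt0 ?wpow_root. Qed.

Lemma alpha_sqr (r : nat) : alpha r ^+ 2 = P (w ^+ r).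
Proof. exact: sqrtCK. Qed.

Lemma alpha_beta (r : nat) : alpha r * beta r = P 1.
Proof. by rewrite mulrC divfK ?gt_eqF ?alpha_gt0. Qed.

Lemma beta_gt0 (r : nat) : 0 < beta r.
Proof. by rewrite divr_gt0 ?alpha_gt0 ?P_root_gt0 ?expr1n. Qed.

Lemma beta_sqr_defect (r : nat) : beta r ^+ 2 + defect r = P (w ^+ r)^-1.
Proof. by rewrite /defect expr_div_n alpha_sqr addrC subrK. Qed.

Lemma defect_edge (m : nat) : m \in [:: 0; 1; N.-1]%N -> defect m = 0.
Proof.
have P_neq0 z : z ^+ N = 1 -> P z != 0 by move=> zN; rewrite gt_eqF ?P_root_gt0.
rewrite !inE => /or3P[] /eqP->; apply/eqP; rewrite /defect subr_eq0.
- by rewrite expr0 invr1 expr2 mulfK ?P_neq0 ?expr1n.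
- by rewrite expr1 -P_w_balanced mulrAC mulfV ?mul1r ?P_neq0 ?wN.
- by rewrite -w_inv -P_w_balanced invrK mulfK ?P_neq0 ?root1_inv ?wN.
Qed.

Lemma defect_gt0 (m : nat) : (1 < m < N.-1)%N -> 0 < defect m.
Proof.
move=> /andP[m1 mN]; have PN0 : 0 < P (w ^+ m) by rewrite P_root_gt0 ?wpow_root.
have -> : defect m = (P (w ^+ m) * P (w ^+ m)^-1 - P 1 ^+ 2) / P (w ^+ m).
  by rewrite /defect; field; rewrite gt_eqF.
rewrite divr_gt0 // subr_gt0 P_gap ?wpow_root //.
- by rewrite -(expr0 w) wpow_inj //; lia.
- by rewrite -{2}(expr1 w) wpow_inj //; lia.
- by rewrite w_inv wpow_inj //; lia.
Qed.

Lemma defect_ge0 (m : nat) : (m < N)%N -> 0 <= defect m.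
Proof.
move=> mN; have [/defect_gt0/ltW //|edge] := boolP (1 < m < N.-1)%N.
by rewrite defect_edge // !inE; move: mN edge; lia.
Qed.

Lemma gamma_sqr (m : nat) : gamma m ^+ 2 = defect m.
Proof. exact: sqrtCK. Qed.

Lemma alpha_conj (r : nat) : (alpha r)^* = alpha r.
Proof. by rewrite geC0_conj ?ltW ?alpha_gt0. Qed.

Lemma beta_conj (r : nat) : (beta r)^* = beta r.
Proof. by rewrite geC0_conj ?ltW ?beta_gt0. Qed.

Lemma gamma_conj (m : nat) : (m < N)%N -> (gamma m)^* = gamma m.
Proof. by move=> mN; rewrite geC0_conj ?sqrtC_ge0 ?defect_ge0. Qed.

(* Fourier sums of P along the powers of a root of unity y: the sum is a
   combination of the geometric sums of z, y z and y^-1 z, so it vanishes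
   when none of these is 1. *)
Lemma sum_P_pow {y z : algC} : y ^+ N = 1 -> z ^+ N = 1 ->
  z != 1 -> y * z != 1 -> y^-1 * z != 1 -> \sum_(r < N) P (y ^+ r) * z ^+ r = 0.
Proof.
move=> yN zN z1 yz1 yiz1.
have -> : \sum_(r < N) P (y ^+ r) * z ^+ r = A * \sum_(r < N) z ^+ r +
    B * \sum_(r < N) (y * z) ^+ r + B^* * \sum_(r < N) (y^-1 * z) ^+ r.
  rewrite !mulr_sumr -!big_split /=; apply: eq_bigr => r _.
  by rewrite /P !exprMn exprVn; ring.
have root_mul x : x ^+ N = 1 -> (x * z) ^+ N = 1 by move=> xN; rewrite exprMn xN zN mulr1.
rewrite !geo_sum_root ?root_mul ?root1_inv //.
by rewrite (negPf z1) (negPf yz1) (negPf yiz1) !mulr0 !addr0.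
Qed.

Variable M : nat.
Hypothesis M_def : M = (N + (N - 3))%N.

Definition vcol (j r : nat) : algC :=
  if (r < N)%N then (w ^+ j) ^+ r * alpha r else 0.
Definition wcol (j r : nat) : algC :=
  if (r < N)%N then (w ^+ j) ^+ r * beta r
  else (w ^+ j) ^+ (r - N).+2 * gamma (r - N).+2.

Definition Wv : 'M[algC]_(M, N) := \matrix_(r < M, j < N) vcol j r.
Definition Ww : 'M[algC]_(M, N) := \matrix_(r < M, j < N) wcol j r.

Lemma sum_rows (f : nat -> algC) :
  \sum_(r < M) f r = \sum_(r < N) f r + \sum_(m < N - 3) f (N + m)%N.
Proof. by rewrite M_def big_split_ord. Qed.

Lemma w_dmod (i j : 'I_N) : w ^+ dmod N i j = (w ^+ i)^-1 * w ^+ j.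
Proof.
rewrite /dmod expr_mod ?wN // exprB ?exprD ?wN ?mulr1 1?mulrC //; last first.
  by rewrite unitfE (wpow_neq0 1).
by rewrite ltnW // ltn_addl.
Qed.

Lemma modes_conj_mul (i j : 'I_N) (r : nat) :
  ((w ^+ i) ^+ r)^* * (w ^+ j) ^+ r = (w ^+ dmod N i j) ^+ r.
Proof. by rewrite rmorphXn /= wpow_conj w_dmod exprMn exprVn. Qed.

Lemma cdot_vv (i j : 'I_N) :
  cdot (col i Wv) (col j Wv) = \sum_(r < N) P (w ^+ r) * (w ^+ dmod N i j) ^+ r.
Proof.
rewrite cdot_col; under eq_bigr => r _ do rewrite !mxE.
rewrite (sum_rows (fun r => (vcol i r)^* * vcol j r)) /=.
rewrite [X in _ + X]big1 ?addr0 => [|m _]; last by rewrite /vcol ltnNge leq_addr mulr0.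
apply: eq_bigr => r _; rewrite /vcol ltn_ord rmorphM /= alpha_conj -alpha_sqr.
by rewrite -modes_conj_mul; ring.
Qed.

Lemma cdot_vw (i j : 'I_N) :
  cdot (col i Wv) (col j Ww) = P 1 * \sum_(r < N) (w ^+ dmod N i j) ^+ r.
Proof.
rewrite cdot_col; under eq_bigr => r _ do rewrite !mxE.
rewrite (sum_rows (fun r => (vcol i r)^* * wcol j r)) /=.
rewrite [X in _ + X]big1 ?addr0 => [|m _]; last by rewrite /vcol ltnNge leq_addr conjC0 mul0r.
rewrite mulr_sumr; apply: eq_bigr => r _; rewrite /vcol /wcol ltn_ord rmorphM /= alpha_conj.
by rewrite -modes_conj_mul -(alpha_beta r); ring.
Qed.

Lemma cdot_ww (i j : 'I_N) :
  cdot (col i Ww) (col j Ww) = \sum_(r < N) P (w ^+ r)^-1 * (w ^+ dmod N i j) ^+ r.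
Proof.
rewrite cdot_col; under eq_bigr => r _ do rewrite !mxE.
rewrite (sum_rows (fun r => (wcol i r)^* * wcol j r)) /=.
have extra_rows : \sum_(m < N - 3) (wcol i (N + m))^* * wcol j (N + m) =
    \sum_(r < N) defect r * (w ^+ dmod N i j) ^+ r.
  apply/esym/(etrans (sum_edges (fun r => defect r * _) (ltnW N_gt3))).
  rewrite !defect_edge ?mem_head ?inE ?eqxx ?orbT // !mul0r !add0r.
  apply: eq_bigr => m _; rewrite /wcol ltnNge leq_addr /= addKn rmorphM /=.
  rewrite gamma_conj; last by have := ltn_ord m; lia.
  by rewrite mulrACA modes_conj_mul -expr2 gamma_sqr mulrC.
rewrite extra_rows -big_split /=; apply: eq_bigr => r _.
rewrite /wcol ltn_ord rmorphM /= beta_conj mulrACA modes_conj_mul -expr2.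
by rewrite mulrC -mulrDl beta_sqr_defect.
Qed.

Lemma off_band_modes (i j : 'I_N) : dmod N i j \notin [:: 0; 1; N.-1]%N ->
  let z := w ^+ dmod N i j in [/\ z != 1, w * z != 1 & w^-1 * z != 1].
Proof.
have dN : (dmod N i j < N)%N by rewrite ltn_pmod.
move: (dmod N i j) dN => d dN; rewrite !inE => dmid /=.
have not_dvd e : (0 < e < N)%N -> ~~ (N %| e)%N.
  by case/andP=> e0 eN; apply/negP => /(dvdn_leq e0); lia.
rewrite -exprS w_inv -exprD !wpow_eq1 (_ : N.-1 + d = N + d.-1)%N; last by lia.
by rewrite dvdn_addr // !not_dvd //; lia.
Qed.

Lemma wpow_ratio_eq1 (l j : 'I_N) : ((w ^+ l)^-1 * w ^+ j == 1) = (j == l).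
Proof.
rewrite -(inj_eq (mulfI (wpow_neq0 l))) mulr1 mulVKf ?wpow_neq0 //.
exact: wpow_inj.
Qed.

Lemma sum_mode_ratio (l j : 'I_N) :
  \sum_(m < N) ((w ^+ l)^-1 * w ^+ j) ^+ m = if j == l then N%:R else 0.
Proof. by rewrite geo_sum_root -?w_dmod ?wpow_root // w_dmod wpow_ratio_eq1. Qed.

Lemma orth_vv (i j : 'I_N) : dmod N i j \notin [:: 0; 1; N.-1]%N ->
  corth (col i Wv) (col j Wv).
Proof.
move=> /off_band_modes [z1 wz1 wiz1]; rewrite /corth cdot_vv.
exact: sum_P_pow wN (wpow_root _) z1 wz1 wiz1.
Qed.

Lemma orth_ww (i j : 'I_N) : dmod N i j \notin [:: 0; 1; N.-1]%N ->
  corth (col i Ww) (col j Ww).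
Proof.
move=> /off_band_modes [z1 wz1 wiz1]; rewrite /corth cdot_ww.
rewrite -[RHS](sum_P_pow (root1_inv wN) (wpow_root (dmod N i j)) z1 wiz1) ?invrK //.
by apply: eq_bigr => r _; rewrite exprVn.
Qed.

Lemma orth_vw (i j : 'I_N) : i != j -> corth (col i Wv) (col j Ww).
Proof.
by move=> ij; rewrite /corth cdot_vw w_dmod sum_mode_ratio eq_sym (negPf ij) mulr0.
Qed.

Definition fourier (F : 'I_N -> algC) (m : nat) : algC :=
  \sum_(j < N) (w ^+ j) ^+ m * F j.

Lemma fourier_inversion (F : 'I_N -> algC) (l : 'I_N) :
  \sum_(m < N) ((w ^+ l)^-1) ^+ m * fourier F m = N%:R * F l.
Proof.
rewrite /fourier; under eq_bigr => m _ do rewrite mulr_sumr.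
rewrite exchange_big /=.
under eq_bigr => j _ do under eq_bigr => m _ do rewrite mulrA -exprMn.
rewrite (bigD1 l) //= [X in _ + X]big1 ?addr0 => [|j jl]; rewrite -mulr_suml sum_mode_ratio.
  by rewrite eqxx.
by rewrite (negPf jl) mul0r.
Qed.

Lemma fourier_band (F : 'I_N -> algC) (l : 'I_N) :
  (forall m, (1 < m < N.-1)%N -> fourier F m = 0) ->
  N%:R * F l = fourier F 0 + (w ^+ l)^-1 * fourier F 1 + w ^+ l * fourier F N.-1.
Proof.
move=> band; rewrite -fourier_inversion.
apply: etrans (sum_edges (fun m => _ ^+ m * fourier F m) (ltnW N_gt3)) _.
rewrite big1 ?addr0 => [|m _].
  by rewrite expr0 mul1r expr1 (root1_pred N_gt0) ?root1_inv ?wpow_root // invrK.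
by rewrite band ?mulr0 //; have := ltn_ord m; lia.
Qed.

Definition in_kernel (x : 'I_(N + N) -> algC) : Prop :=
  forall r : 'I_M, \sum_(c < N + N) row_mx Wv Ww r c * x c = 0.

Definition vpart (x : 'I_(N + N) -> algC) (j : 'I_N) : algC := x (lshift N j).
Definition wpart (x : 'I_(N + N) -> algC) (j : 'I_N) : algC := x (rshift N j).

Lemma kernel_row {x : 'I_(N + N) -> algC} {r : nat} : in_kernel x -> (r < M)%N ->
  \sum_(j < N) vcol j r * vpart x j + \sum_(j < N) wcol j r * wpart x j = 0.
Proof.
move=> ker rM; rewrite -[RHS](ker (Ordinal rM)) big_split_ord.
by congr (_ + _); apply: eq_bigr => j _; rewrite ?row_mxEl ?row_mxEr mxE.
Qed.

Lemma kernel_low {x : 'I_(N + N) -> algC} {m : nat} : in_kernel x -> (m < N)%N ->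
  alpha m * fourier (vpart x) m + beta m * fourier (wpart x) m = 0.
Proof.
move=> ker mN; have mM : (m < M)%N by rewrite M_def ltn_addr.
rewrite -[RHS](kernel_row ker mM) /fourier !mulr_sumr.
by congr (_ + _); apply: eq_bigr => j _; rewrite /vcol /wcol mN; ring.
Qed.

Lemma kernel_high {x : 'I_(N + N) -> algC} {m : nat} : in_kernel x ->
  (1 < m < N.-1)%N -> fourier (wpart x) m = 0.
Proof.
move=> ker mid; have rM : (N + m - 2 < M)%N by rewrite M_def; lia.
have := kernel_row ker rM; rewrite big1 => [|j _]; last first.
  by rewrite /vcol ifN ?mul0r //; lia.
have wcol_high j : wcol j (N + m - 2) = (w ^+ j) ^+ m * gamma m.
  rewrite /wcol ifN; last by lia.
  by have -> : (N + m - 2 - N).+2 = m by lia.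
rewrite add0r; under eq_bigr => j _ do rewrite wcol_high.
under eq_bigr => j _ do rewrite mulrAC.
rewrite -mulr_suml; move/eqP; rewrite mulf_eq0 => /orP[/eqP //|].
by rewrite /gamma sqrtC_eq0 gt_eqF ?defect_gt0.
Qed.

(* nu = P(1) / P(w); by the balance P(w) P(w^-1) = P(1)^2 it is also
   P(w^-1) / P(1), and nu <> 1 because P(w) <> P(w^-1). *)
Definition nu := P 1 / P w.

Let P1_neq0 : P 1 != 0. Proof. by rewrite gt_eqF ?P_root_gt0 ?expr1n. Qed.
Let Pw_neq0 : P w != 0. Proof. by rewrite gt_eqF ?P_root_gt0 ?wN. Qed.

Lemma nu_gt0 : 0 < nu.
Proof. by rewrite divr_gt0 ?P_root_gt0 ?expr1n ?wN. Qed.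

Let nu_neq0 : nu != 0. Proof. by rewrite gt_eqF ?nu_gt0. Qed.

Lemma nu_inv : P 1 / P w^-1 = nu^-1.
Proof.
have Pwi : P w^-1 = P 1 ^+ 2 / P w by rewrite -P_w_balanced mulrAC mulfV ?mul1r.
by rewrite Pwi /nu invf_div; field; rewrite P1_neq0 Pw_neq0.
Qed.

Lemma nu_neq1 : nu != 1.
Proof.
apply: contra P_w_neq => /eqP nu1; apply/eqP.
have P1w : P 1 = P w by apply: (divIf Pw_neq0); rewrite -/nu nu1 mulfV.
by apply: (mulfI Pw_neq0); rewrite P_w_balanced P1w.
Qed.

Definition node (c : 'I_(N + N)) : algC :=
  match split c with inl l => nu * (w ^+ l)^-1 | inr l => (w ^+ l)^-1 end.

Definition column_sign (c : 'I_(N + N)) : algC :=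
  match split c with inl _ => -1 | inr _ => 1 end.

Lemma node_neq0 (c : 'I_(N + N)) : node c != 0.
Proof.
rewrite /node; case: (split c) => l; last by rewrite invr_eq0 wpow_neq0.
by rewrite mulf_neq0 ?invr_eq0 ?wpow_neq0.
Qed.

Lemma node_inj (c d : 'I_(N + N)) : c != d -> node c != node d.
Proof.
have norm_wi (l : nat) : `|(w ^+ l)^-1| = 1 by rewrite normfV normrX w_norm expr1n invr1.
have cross (l l' : nat) : nu * (w ^+ l)^-1 != (w ^+ l')^-1.
  apply: contra nu_neq1 => /eqP/(congr1 (fun z => `|z|)) /=.
  by rewrite normrM !norm_wi mulr1 gtr0_norm ?nu_gt0 // => /eqP.
apply: contraNneq; rewrite /node.
case: (split_ordP c) => i ->; case: (split_ordP d) => j -> /=.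
- by move=> e; move/invr_inj/eqP: (mulfI nu_neq0 e); rewrite wpow_inj.
- by move/eqP; rewrite (negPf (cross _ _)).
- by move/esym/eqP; rewrite (negPf (cross _ _)).
- by move/invr_inj/eqP; rewrite wpow_inj // -val_eqE /= eqn_add2l.
Qed.

Definition kernel_poly (x : 'I_(N + N) -> algC) : {poly algC} :=
  Poly [:: fourier (wpart x) N.-1; fourier (wpart x) 0%N; fourier (wpart x) 1%N].

Lemma kernel_vpart {x : 'I_(N + N) -> algC} {m : nat} : in_kernel x -> (m < N)%N ->
  fourier (vpart x) m = - (P 1 / P (w ^+ m)) * fourier (wpart x) m.
Proof.
move=> ker mN; have alpha_neq0 : alpha m != 0 by rewrite gt_eqF ?alpha_gt0.
move/eqP: (kernel_low ker mN); rewrite addr_eq0 => /eqP aX.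
by rewrite -[LHS](mulKf alpha_neq0) aX /beta -alpha_sqr; field.
Qed.

Lemma kernel_poly_node (x : 'I_(N + N) -> algC) (c : 'I_(N + N)) : in_kernel x ->
  (kernel_poly x).[node c] = N%:R * column_sign c * node c * x c.
Proof.
move=> ker; rewrite horner_Poly /= mul0r add0r /node /column_sign.
have wl0 (l : 'I_N) : w ^+ l != 0 := wpow_neq0 l.
have [Npred_lt N_gt1] : (N.-1 < N /\ 1 < N)%N by lia.
case: (split_ordP c) => l ->.
  have -> : N%:R * -1 * (nu / w ^+ l) * x (lshift N l) =
      - (nu / w ^+ l) * (N%:R * vpart x l) by rewrite /vpart; ring.
  rewrite fourier_band => [|m mid]; last by rewrite kernel_vpart ?kernel_high ?mulr0 //; lia.
  rewrite !kernel_vpart // expr0 expr1 -w_inv nu_inv -/nu.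
  by field; rewrite nu_neq0 wl0 P1_neq0.
have -> : N%:R * 1 * (w ^+ l)^-1 * x (rshift N l) = (w ^+ l)^-1 * (N%:R * wpart x l).
  by rewrite /wpart; ring.
by rewrite fourier_band => [|m mid]; [field | exact: kernel_high].
Qed.

(* A kernel vector vanishing at three distinct columns is zero: Q_x then has
   three distinct roots, hence Q_x = 0, and every entry of x vanishes. *)
Lemma kernel_three_zeros (x : 'I_(N + N) -> algC) (cs : seq 'I_(N + N)) :
  in_kernel x -> uniq cs -> size cs = 3 -> (forall c, c \in cs -> x c = 0) ->
  forall c, x c = 0.
Proof.
move=> ker cs_uniq cs_size cs_zero.
have node_injective : injective node.
  by move=> c d; apply: contra_eq; exact: node_inj.
have Q0 : kernel_poly x = 0.
  apply: (@roots_geq_poly_eq0 _ _ (map node cs)).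
  - apply/allP => _ /mapP[c cs_c ->].
    by rewrite /root kernel_poly_node // cs_zero // mulr0.
  - by rewrite map_inj_uniq.
  - by rewrite size_map cs_size size_Poly.
have sign_neq0 c : column_sign c != 0.
  by rewrite /column_sign; case: split => _; rewrite ?oppr_eq0 oner_eq0.
move=> c; apply/eqP; have := @kernel_poly_node x c ker.
rewrite Q0 horner0 => /esym/eqP; rewrite !mulf_eq0 (negPf (node_neq0 c)).
by rewrite (negPf (sign_neq0 c)) pnatr_eq0 eqn0Ngt N_gt0.
Qed.

Lemma minors_nonsingular (f : 'I_M -> 'I_(N + N)) : injective f ->
  \det (colsub f (row_mx Wv Ww)) != 0.
Proof.
move=> f_inj; apply: (minor_det_neq0 f_inj) => x ker off.
have NN : (N + N = M + 3)%N by rewrite M_def; lia.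
have [cs [cs_uniq cs_size cs_off]] := three_outside_codom f_inj NN.
by apply: kernel_three_zeros ker cs_uniq cs_size _ => c /cs_off; exact: off.
Qed.

End Construction.

End Lemma3Construction.

Import Lemma3Construction.

Theorem lemma3 (k : nat) (hk : (1 <= k)%N) :
  exists Wv Ww : 'M[algC]_(4 * k + 1, 2 * k + 2),
    [/\ (forall i j : 'I_(2 * k + 2),
           dmod (2 * k + 2) i j \notin [:: 0%N; 1%N; (2 * k + 1)%N] ->
           corth (col i Wv) (col j Wv)),
        (forall i j : 'I_(2 * k + 2),
           dmod (2 * k + 2) i j \notin [:: 0%N; 1%N; (2 * k + 1)%N] ->
           corth (col i Ww) (col j Ww)),
        (forall i j : 'I_(2 * k + 2), i != j -> corth (col i Wv) (col j Ww))
      & (forall f : 'I_(4 * k + 1) -> 'I_(2 * k + 2 + (2 * k + 2)),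
           injective f -> \det (colsub f (row_mx Wv Ww)) != 0)].
Proof.
have N_gt3 : (3 < 2 * k + 2)%N by lia.
have M_def : (4 * k + 1 = 2 * k + 2 + (2 * k + 2 - 3))%N by lia.
have N_pred : (2 * k + 1 = (2 * k + 2).-1)%N by lia.
have [w [w_prim w_extremal]] := exists_extremal_root (ltnW N_gt3).
exists (Wv (2 * k + 2) w (4 * k + 1)), (Ww (2 * k + 2) w (4 * k + 1)).
rewrite N_pred; split.
- by move=> i j; apply: orth_vv.
- by move=> i j; apply: orth_ww.
- by move=> i j; apply: orth_vw.
- by move=> f; apply: minors_nonsingular.
Qed.
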